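(* Let $\{\delta_q\}_{q\in\Sigma}$ be a Delta-basis of $\mathfrak{U}(\mathbb{R})$ with dual Sigma-basis $\{\sigma_q\}_{q\in\Sigma}$. For every $u\in[L^1_{loc}(\mathbb{R})]^*$ there is a unique $\widetilde{u}\in\mathfrak{U}(\mathbb{R})$ such that $\int^*\widetilde{u}v\,dx=\int^*uv\,dx$ for all $v\in\mathfrak{U}(\mathbb{R})$, and $$\widetilde{u}(x)=\sum_{q\in\Sigma}\left[\int^*u(\xi)\delta_q(\xi)d\xi\right]\sigma_q(x)=\sum_{q\in\Sigma}\left[\int^*u(\xi)\sigma_q(\xi)d\xi\right]\delta_q(x).$$
   Context: Framework (Λ-limits / nonstandard analysis): $\mathfrak{X}=\mathcal{P}_{fin}(\mathfrak{F}(\mathbb{R},\mathbb{R}))$ directed by inclusion; $\mathbb{R}^*\supset\mathbb{R}$ is a non-Archimedean ordered field of Λ-limits of nets $\mathfrak{X}\to\mathbb{R}$; internal sets/functions, natural extensions $E^*,f^*$, hyperfinite sums are defined via Λ-limits; $\int^*$ is the natural extension of the Lebesgue integral. For $\lambda\in\mathfrak{X}$, $V_\lambda$ is the span of $\lambda$; an internal $u=\lim_{\lambda\uparrow\Lambda}u_\lambda$ is an ultrafunction if $u_\lambda\in V_\lambda$ for all $\lambda$; for a vector space $W$ of real functions, $\widetilde{W}=W^*\cap\{\text{ultrafunctions}\}$. Grid: a positive infinite $\beta\in\mathbb{R}^*$, a hyperfinite $\Gamma=\{\gamma_0<\dots<\gamma_\ell\}\subset\mathbb{R}^*$ with $\gamma_0=-\beta$,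 $\gamma_\ell=\beta$, $0<\gamma_{j+1}-\gamma_j<\eta$ for a fixed infinitesimal $\eta$, and $\mathbb{R}\subseteq\Gamma$; $\mathbb{I}_j=(\gamma_j,\gamma_{j+1})_{\mathbb{R}^*}$ with characteristic function $\chi_j$. $\mathfrak{U}(\mathbb{R})$: functions $u:[-\beta,\beta]\to\mathbb{R}^*$ of the form $\sum_{j=0}^{\ell-1}v_j\chi_j$ with $v_j\in\widetilde{\mathcal{C}^1(\mathbb{R})}$ (extended by $0$ outside $[-\beta,\beta]$ when integrating against functions on $\mathbb{R}^*$). Values at grid points: $u(\gamma_j)=\tfrac12(u(\gamma_j^+)+u(\gamma_j^-))$ for $1\le j\le\ell-1$, $u(-\beta)=u(\gamma_0^+)$, $u(\beta)=u(\gamma_\ell^-)$. For $q\in[-\beta,\beta]$, $\delta_q$ is the unique element of $\mathfrak{U}(\mathbb{R})$ with $\int^*v\delta_q=v(q)$ for all $v\in\mathfrak{U}(\mathbb{R})$. A Delta-basis is a basis $\{\delta_a\}_{a\in\Sigma}$ of $\mathfrak{U}(\mathbb{R})$ of such functions; its dual basis $\{\sigma_a\}_{a\in\Sigma}$ ($\int^*\delta_a\sigma_b=\delta_{ab}$) is the Sigma-basis. *)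

(* Λ-limits are modelled as limits along a fine
   ultrafilter on the directed set 𝔛 = finite subsets of R -> R. *)
From HB Require Import structures.
From mathcomp Require Import all_boot all_order all_algebra.
From mathcomp Require Import all_classical all_reals all_analysis.
Set Implicit Arguments. Unset Strict Implicit. Unset Printing Implicit Defensive.
Import Order.TTheory GRing.Theory Num.Theory.
Import numFieldNormedType.Exports.
Local Open Scope classical_set_scope.
Local Open Scope ring_scope.

Section Lambda.
Variable R : realType.

Definition Xidx := {A : set (R -> R) | finite_set A}.

Definition fine_ultrafilter (Uf : set (set Xidx)) : Prop :=
  Uf setT /\ ~ Uf set0 /\
  (forall A B, Uf A -> A `<=` B -> Uf B) /\
  (forall A B, Uf A -> Uf B -> Uf (A `&` B)) /\
  (forall A, Uf A \/ Uf (~` A)) /\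
  (forall l : Xidx, Uf [set m : Xidx | proj1_sig l `<=` proj1_sig m]).

Variable Uf : set (set Xidx).

Definition ae (P : Xidx -> Prop) : Prop := Uf [set l | P l].

(* hyperreals in R^* : Λ-limits of nets 𝔛 -> R (represented by the net) *)
Definition hyp := Xidx -> R.
Definition hcst (r : R) : hyp := fun _ => r.
Definition heq (a b : hyp) : Prop := ae (fun l => a l = b l).
Definition hle (a b : hyp) : Prop := ae (fun l => a l <= b l).

(* hyperfinite subsets of R^* : Λ-limits of finite sets (given as seqs) *)
Definition hfin := Xidx -> seq R.
Definition hmem (a : hyp) (S : hfin) : Prop := ae (fun l => a l \in S l).

(* internal functions R^* -> R^* : Λ-limits of nets of functions R -> R *)
Definition ifun := Xidx -> R -> R.
Definition iapp (u : ifun) (x : hyp) : hyp := fun l => u l (x l).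

Definition ifam := Xidx -> R -> R -> R.
Definition ifam_at (d : ifam) (a : hyp) : ifun := fun l => d l (a l).

Definition hsum (S : hfin) (c : Xidx -> R -> R) (f : ifam) (x : hyp) : hyp :=
  fun l => \sum_(q <- undup (S l)) c l q * f l q (x l).

(* Lebesgue integral of a product, and its natural extension ∫^* *)
Definition lint (f g : R -> R) : R :=
  Rintegral lebesgue_measure setT (fun x => f x * g x).
Definition iint (u v : ifun) : hyp := fun l => lint (u l) (v l).

Definition span (A : set (R -> R)) (f : R -> R) : Prop :=
  exists n (g : 'I_n -> R -> R) (c : 'I_n -> R),
    (forall i, A (g i)) /\ f = (fun x => \sum_(i < n) c i * g i x).
Definition C1 (f : R -> R) : Prop :=
  (forall x, derivable f x 1) /\ continuous (derive1 f).

Definition is_grid (beta eta : hyp) (G : hfin) : Prop :=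
  (forall r : R, ae (fun l => r < beta l)) /\
  ae (fun l => 0 < eta l) /\
  (forall r : R, 0 < r -> ae (fun l => eta l < r)) /\
  ae (fun l => sorted (fun x y => x < y) (G l) /\
               head 0 (G l) = - beta l /\ last 0 (G l) = beta l /\
               (forall j, (j.+1 < size (G l))%N ->
                  nth 0 (G l) j.+1 - nth 0 (G l) j < eta l)) /\
  (forall r : R, ae (fun l => r \in G l)).

(* λ-component of 𝔘(R): f = sum_{j<ell} v_j chi_j with v_j ∈ V_λ ∩ C^1,
   grid values given by the averaging convention, extended by 0 outside
   [gamma_0, gamma_ell]. *)
Definition Ufun_at (A : set (R -> R)) (g : seq R) (f : R -> R) : Prop :=
  let ell := (size g).-1 in
  exists v : nat -> R -> R,
    (forall j, (j < ell)%N -> span A (v j) /\ C1 (v j)) /\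
    (forall x, x < nth 0 g 0 \/ nth 0 g ell < x -> f x = 0) /\
    (forall j x, (j < ell)%N -> nth 0 g j < x < nth 0 g j.+1 -> f x = v j x) /\
    f (nth 0 g 0) = v 0%N (nth 0 g 0) /\
    f (nth 0 g ell) = v ell.-1 (nth 0 g ell) /\
    (forall j, (0 < j < ell)%N ->
       f (nth 0 g j) = (v j.-1 (nth 0 g j) + v j (nth 0 g j)) / 2).

Definition inU (G : hfin) (u : ifun) : Prop :=
  ae (fun l => Ufun_at (proj1_sig l) (G l) (u l)).

Definition inLloc_star (u : ifun) : Prop :=
  ae (fun l => locally_integrable setT (u l)).

Definition inDom (beta x : hyp) : Prop :=
  hle (fun l => - beta l) x /\ hle x beta.

Definition ifeq (beta : hyp) (u w : ifun) : Prop :=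
  forall x, inDom beta x -> heq (iapp u x) (iapp w x).

Definition is_Ubasis (beta : hyp) (G S : hfin) (f : ifam) : Prop :=
  (forall a, hmem a S -> inU G (ifam_at f a)) /\
  (forall u, inU G u -> exists c : Xidx -> R -> R,
      forall x, inDom beta x -> heq (iapp u x) (hsum S c f x)) /\
  (forall c : Xidx -> R -> R,
      (forall x, inDom beta x -> heq (hsum S c f x) (hcst 0)) ->
      forall a, hmem a S -> heq (fun l => c l (a l)) (hcst 0)).

Definition is_delta (G : hfin) (q : hyp) (d : ifun) : Prop :=
  inU G d /\ forall v, inU G v -> heq (iint v d) (iapp v q).

Definition is_Delta_basis (beta : hyp) (G S : hfin) (d : ifam) : Prop :=
  (forall a, hmem a S -> inDom beta a) /\
  (forall a, hmem a S -> is_delta G a (ifam_at d a)) /\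
  is_Ubasis beta G S d.

Definition is_Sigma_basis (beta : hyp) (G S : hfin) (d s : ifam) : Prop :=
  is_Ubasis beta G S s /\
  (forall a b, hmem a S -> hmem b S ->
     heq (iint (ifam_at d a) (ifam_at s b))
         (hcst (if `[< heq a b >] then 1 else 0))).

End Lambda.

(* The candidate is the hyperfinite projection ut = sum_q [int u delta_q] sigma_q.
   Expanding a test function v in the Delta-basis, v = sum_b c_b delta_b, duality
   gives int sigma_q v = c_q, hence int ut v = sum_q c_q int u delta_q = int u v.
   An element of the space orthogonal to every sigma_a has all its Delta-coordinates
   zero, which gives uniqueness; since the roles of the two bases are symmetric, the
   second formula defines another representative of u and must coincide with ut.  Everything is proved for each index lambda and carried to
   the Lambda-limit through the ultrafilter, the internal universal statements by a
   Los-type argument. *)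
From Pilot Require Import Defs.
From HB Require Import structures.
From mathcomp Require Import all_boot all_order all_algebra.
From mathcomp Require Import all_classical all_reals all_analysis.
From mathcomp Require Import lra zify.
From mathcomp Require Import measurable_realfun.
Set Implicit Arguments. Unset Strict Implicit. Unset Printing Implicit Defensive.
Import Order.TTheory GRing.Theory Num.Theory.
Import numFieldNormedType.Exports.
Local Open Scope classical_set_scope.
Local Open Scope ring_scope.

Section UfunLinear.
Variable R : realType.
Implicit Types (A : set (R -> R)) (f : R -> R).

Lemma C1_lincomb f1 f2 a b : C1 f1 -> C1 f2 -> C1 (fun x => a * f1 x + b * f2 x).
Proof.
move=> [d1 c1] [d2 c2].
have -> : (fun x => a * f1 x + b * f2 x) = a \*: f1 + b \*: f2 by [].
have hd x : derivable (a \*: f1 + b \*: f2) x 1.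
  by apply: derivableD; apply: derivableZ.
split => //.
have -> : derive1 (a \*: f1 + b \*: f2) = fun x => a * derive1 f1 x + b * derive1 f2 x.
  apply/funext => x; rewrite !derive1E deriveD ?deriveZ //; exact: derivableZ.
move=> x; apply: cvgD; apply: cvgM; try exact: cvg_cst; [exact: c1 | exact: c2].
Qed.

Lemma C1_cst0 : C1 (fun _ : R => 0).
Proof.
split; first by move=> x; exact: derivable_cst.
have -> : derive1 (fun _ : R => 0 : R) = cst 0 by apply: funext => y; exact: derive1_cst.
move=> x; exact: cst_continuous.
Qed.

Lemma span0 A : Defs.span A (fun _ => 0).
Proof.
exists 0%N, (fun _ _ => 0), (fun _ => 0); split; first by case.
by apply: funext => x; rewrite big_ord0.
Qed.

Lemma span_lincomb A f1 f2 a b : Defs.span A f1 -> Defs.span A f2 ->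
  Defs.span A (fun x => a * f1 x + b * f2 x).
Proof.
move=> [n1 [g1 [c1 [H1 ->]]]] [n2 [g2 [c2 [H2 ->]]]].
exists (n1 + n2)%N,
  (fun i => match fintype.split i with inl i1 => g1 i1 | inr i2 => g2 i2 end),
  (fun i => match fintype.split i with inl i1 => a * c1 i1 | inr i2 => b * c2 i2 end).
split; first by move=> i; case: (fintype.split i).
apply: funext => x; rewrite big_split_ord /= !mulr_sumr.
congr (_ + _); apply: eq_bigr => i _.
- by rewrite (unsplitK (inl i)) mulrA.
- by rewrite (unsplitK (inr i)) mulrA.
Qed.

Lemma Ufun_at_lincomb A g f1 f2 a b : Ufun_at A g f1 -> Ufun_at A g f2 ->
  Ufun_at A g (fun x => a * f1 x + b * f2 x).
Proof.
move=> [v1 [Hv1 [Z1 [I1 [L1 [R1 M1]]]]]] [v2 [Hv2 [Z2 [I2 [L2 [R2 M2]]]]]].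
exists (fun j x => a * v1 j x + b * v2 j x); split.
  move=> j hj; have [s1 c1] := Hv1 j hj; have [s2 c2] := Hv2 j hj.
  by split; [exact: span_lincomb | exact: C1_lincomb].
split; first by move=> x hx; rewrite Z1 // Z2 // !mulr0 addr0.
split; first by move=> j x hj hx; rewrite (I1 j) // (I2 j).
split; first by rewrite L1 L2.
split; first by rewrite R1 R2.
move=> j hj; rewrite M1 // M2 //; lra.
Qed.

Lemma Ufun_at0 A g : Ufun_at A g (fun _ => 0).
Proof.
exists (fun _ _ => 0); split; first by move=> j _; split; [exact: span0 | exact: C1_cst0].
split => //; split => //; split => //; split => //.
by move=> j _; rewrite addr0 mul0r.
Qed.

Lemma Ufun_at_sum A g (s : seq R) (c : R -> R) (F : R -> R -> R) :
  (forall q, q \in s -> Ufun_at A g (F q)) ->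
  Ufun_at A g (fun x => \sum_(q <- s) c q * F q x).
Proof.
elim: s => [|q s IH] H.
  have -> : (fun x => \sum_(q <- [::]) c q * F q x) = fun _ => 0.
    by apply: funext => x; rewrite big_nil.
  exact: Ufun_at0.
have -> : (fun x => \sum_(q0 <- q :: s) c q0 * F q0 x) =
  (fun x => c q * F q x + 1 * \sum_(q0 <- s) c q0 * F q0 x).
  by apply: funext => x; rewrite big_cons mul1r.
apply: Ufun_at_lincomb; first by apply: H; rewrite mem_head.
by apply: IH => q' hq'; apply: H; rewrite in_cons hq' orbT.
Qed.

End UfunLinear.

Section Lint.
Variable R : realType.
Local Notation mu := (@lebesgue_measure R).
Implicit Types (f k : R -> R).

Lemma lintC f k : lint f k = lint k f.
Proof. by rewrite /lint; congr Rintegral; apply: funext => x; rewrite mulrC. Qed.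

Lemma eq_lint f f' k : f =1 f' -> lint f k = lint f' k.
Proof. by move=> e; rewrite /lint; congr Rintegral; apply: funext => x; rewrite e. Qed.

Lemma integrable_EFinZ (c : R) f : mu.-integrable setT (EFin \o f) ->
  mu.-integrable setT (EFin \o (fun x => c * f x)).
Proof. by move=> hf; apply: eq_integrable (integrableZl _ c hf) => // x _ /=. Qed.

Lemma integrable_EFinD f1 f2 : mu.-integrable setT (EFin \o f1) ->
  mu.-integrable setT (EFin \o f2) ->
  mu.-integrable setT (EFin \o (fun x => f1 x + f2 x)).
Proof. by move=> h1 h2; apply: eq_integrable (integrableD _ h1 h2) => // x _ /=. Qed.

Lemma integrable_sum_mul (s : seq R) (c : R -> R) (F : R -> R -> R) k :
  (forall q, q \in s -> mu.-integrable setT (EFin \o (fun x => F q x * k x))) ->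
  mu.-integrable setT (EFin \o (fun x => (\sum_(q <- s) c q * F q x) * k x)).
Proof.
elim: s => [|q s IH] H.
  have -> : (fun x => (\sum_(q <- [::]) c q * F q x) * k x) = fun _ => 0.
    by apply: funext => x; rewrite big_nil mul0r.
  exact: integrable0.
have -> : (fun x => (\sum_(q0 <- q :: s) c q0 * F q0 x) * k x) =
    fun x => c q * (F q x * k x) + (\sum_(q0 <- s) c q0 * F q0 x) * k x.
  by apply: funext => x; rewrite big_cons mulrDl mulrA.
apply: integrable_EFinD; first by apply: integrable_EFinZ; apply: H; rewrite mem_head.
by apply: IH => q' hq'; apply: H; rewrite in_cons hq' orbT.
Qed.

Lemma lint_sum (s : seq R) (c : R -> R) (F : R -> R -> R) k :
  (forall q, q \in s -> mu.-integrable setT (EFin \o (fun x => F q x * k x))) ->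
  lint (fun x => \sum_(q <- s) c q * F q x) k = \sum_(q <- s) c q * lint (F q) k.
Proof.
elim: s => [|q s IH] H.
  rewrite /lint big_nil (_ : (fun x => _) = cst 0) ?Rintegral_cst ?mul0r //.
  by apply: funext => x; rewrite big_nil mul0r.
have H' q' : q' \in s -> mu.-integrable setT (EFin \o (fun x => F q' x * k x)).
  by move=> hq'; apply: H; rewrite in_cons hq' orbT.
have Hq : mu.-integrable setT (EFin \o (fun x => F q x * k x)) by apply: H; rewrite mem_head.
rewrite [LHS]/lint.
have -> : (fun x => (\sum_(q0 <- q :: s) c q0 * F q0 x) * k x) =
    fun x => c q * (F q x * k x) + (\sum_(q0 <- s) c q0 * F q0 x) * k x.
  by apply: funext => x; rewrite big_cons mulrDl mulrA.
rewrite RintegralD //; [|exact: (integrable_EFinZ (c q) Hq)|exact: integrable_sum_mul].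
by rewrite RintegralZl // big_cons; congr (_ + _); exact: IH.
Qed.

Lemma lintB f1 f2 k :
  mu.-integrable setT (EFin \o (fun x => f1 x * k x)) ->
  mu.-integrable setT (EFin \o (fun x => f2 x * k x)) ->
  lint (fun x => f1 x - f2 x) k = lint f1 k - lint f2 k.
Proof.
move=> h1 h2; rewrite /lint -RintegralB //; congr Rintegral.
by apply: funext => x; rewrite mulrBl.
Qed.

End Lint.

Lemma big_undup_kronecker (R : pzRingType) (S : seq R) (c : R -> R) (a : R) (F : R -> R) :
  a \in S -> {in S, forall b, F b = if b == a then 1 else 0} ->
  \sum_(b <- undup S) c b * F b = c a.
Proof.
move=> aS HF; rewrite (bigD1_seq a) ?mem_undup ?undup_uniq //=.
rewrite HF // eqxx mulr1 big1_seq ?addr0 // => b /andP[ba bS].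
by rewrite HF ?(negbTE ba) ?mulr0 // -mem_undup.
Qed.

Section DualFamily.
Variables (R : realType) (A : set (R -> R)) (g : seq R).

Definition dual_family (S : seq R) (e1 e2 : R -> R -> R) : Prop :=
  (forall q, q \in S -> Ufun_at A g (e1 q) /\ Ufun_at A g (e2 q)) /\
  (forall q b, q \in S -> b \in S -> lint (e1 b) (e2 q) = if b == q then 1 else 0).

Lemma dual_family_sym S e1 e2 : dual_family S e1 e2 -> dual_family S e2 e1.
Proof.
move=> [hU hD]; split; first by move=> q /hU[].
by move=> q b qS bS; rewrite lintC hD // eq_sym.
Qed.

End DualFamily.

Section Grid.
Variable R : realType.
Variable g : seq R.
Hypothesis g_sorted : sorted (fun x y : R => x < y) g.
Hypothesis g_size : (1 < size g)%N.
Local Notation gm j := (nth 0 g j).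
Local Notation ell := (size g).-1.

Lemma grid_lt i j : (i < j)%N -> (j < size g)%N -> gm i < gm j.
Proof.
move=> ij jn; apply: (sorted_ltn_nth lt_trans) => //; rewrite inE //.
exact: ltn_trans ij jn.
Qed.

Lemma grid_le i j : (i <= j)%N -> (j < size g)%N -> gm i <= gm j.
Proof. by rewrite leq_eqVlt => /orP[/eqP -> //|ij] jn; exact/ltW/grid_lt. Qed.

Lemma grid_lt_index i j : (i < size g)%N -> gm i < gm j -> (i < j)%N.
Proof.
move=> iN h; rewrite ltnNge; apply/negP => ji.
by have := grid_le ji iN; rewrite leNgt h.
Qed.

Lemma grid_inj i j : (i < size g)%N -> (j < size g)%N -> gm i = gm j -> i = j.
Proof.
move=> iN jN e; case: (ltngtP i j) => // h.
- by have := grid_lt h jN; rewrite e ltxx.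
- by have := grid_lt h iN; rewrite e ltxx.
Qed.

Lemma prednK_size : ell.+1 = size g.
Proof. by rewrite prednK // (ltn_trans _ g_size). Qed.

Lemma lt_pred_size j : (j < ell)%N -> (j.+1 < size g)%N.
Proof. by rewrite -prednK_size. Qed.

Lemma le_pred_size j : (j <= ell)%N -> (j < size g)%N.
Proof. by rewrite -prednK_size ltnS. Qed.

Lemma nat_last_true (P : nat -> Prop) n : P 0%N -> ~ P n ->
  exists j, (j < n)%N /\ P j /\ ~ P j.+1.
Proof.
elim: n => [//|n IH] h0 hn.
case: (pselect (P n)) => hPn; first by exists n.
have [j [jn hj]] := IH h0 hPn; exists j; split => //; exact: ltnW.
Qed.

Lemma grid_cover x : gm 0 <= x <= gm ell ->
  (exists k, (k <= ell)%N /\ x = gm k) \/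
  (exists k, (k < ell)%N /\ gm k < x < gm k.+1).
Proof.
move=> /andP[h0 h1].
case: (pselect (exists k, (k <= ell)%N /\ x = gm k)) => hk; first by left.
right.
have nx k : (k <= ell)%N -> x <> gm k by move=> kl e; apply: hk; exists k.
have H0 : gm 0 < x by rewrite lt_neqAle h0 andbT; apply/eqP => e; apply: (nx 0%N).
have H1 : ~ gm ell < x by move=> h; have := lt_le_trans h h1; rewrite ltxx.
have [j [jn [Pj nPj]]] := @nat_last_true (fun j => gm j < x) ell H0 H1.
exists j; split => //; rewrite Pj /= lt_neqAle.
have -> /= : x != gm j.+1 by apply/eqP; apply: nx.
by rewrite leNgt; apply/negP.
Qed.

(* Indicators of the open cells and of the grid points; this explicit form makes
   measurability and boundedness of elements of the space evident. *)
Definition piecewise (v : nat -> R -> R) (f : R -> R) x :=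
  \sum_(j < ell) (gm j < x < gm j.+1)%R%:R * v j x +
  \sum_(j < ell.+1) (x == gm j)%:R * f (gm j).

Lemma piecewiseE v f : (forall x, x < gm 0 \/ gm ell < x -> f x = 0) ->
  (forall j x, (j < ell)%N -> gm j < x < gm j.+1 -> f x = v j x) ->
  f =1 piecewise v f.
Proof.
move=> Z I x.
have ellN : (ell < size g)%N by rewrite -prednK_size.
have [out|inn] : (x < gm 0 \/ gm ell < x) \/ (gm 0 <= x <= gm ell).
  case: (ltrP x (gm 0)) => h0; first by left; left.
  case: (ltrP (gm ell) x) => h1; first by left; right.
  by right; apply/andP.
- rewrite Z // /piecewise !big1 ?addr0 // => j _.
  + have jl : (j <= ell)%N by rewrite -ltnS; exact: ltn_ord.
    have hj : gm 0 <= gm j by apply: grid_le => //; apply: (leq_ltn_trans jl).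
    have hj1 : gm j <= gm ell by apply: grid_le.
    have -> : (x == gm j) = false.
      by apply/negbTE/negP => /eqP e; case: out => c; lra.
    by rewrite mul0r.
  + have j1 : (j.+1 <= ell)%N := ltn_ord j.
    have hj : gm 0 <= gm j by apply: grid_le => //; apply: (leq_ltn_trans (ltnW j1)).
    have hj1 : gm j.+1 <= gm ell by apply: grid_le.
    have -> : (gm j < x < gm j.+1) = false.
      by apply/negbTE/negP => /andP[a b]; case: out => c; lra.
    by rewrite mul0r.
- case: (grid_cover inn) => [[k [kl ->]]|[k [kl /andP[a b]]]].
  + have kN : (k < size g)%N by apply: (leq_ltn_trans kl).
    rewrite /piecewise big1 ?add0r; last first.
      move=> j _; have jN : (j.+1 < size g)%N by apply: lt_pred_size.
      have -> : (gm j < gm k < gm j.+1) = false.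
        apply/negbTE/negP => /andP[c e].
        have := grid_lt_index (ltnW jN) c; have := grid_lt_index kN e; lia.
      by rewrite mul0r.
    have kS : (k < ell.+1)%N by rewrite ltnS.
    rewrite (bigD1 (Ordinal kS)) //= eqxx mul1r big1 ?addr0 // => j /eqP jk.
    have jN : (j < size g)%N by apply: le_pred_size; rewrite -ltnS.
    have -> : (gm k == gm j) = false.
      apply/negbTE/negP => /eqP e; apply: jk; apply: val_inj => /=.
      exact: (grid_inj jN kN (esym e)).
    by rewrite mul0r.
  + have kN : (k.+1 < size g)%N by apply: lt_pred_size.
    rewrite /piecewise [X in _ = _ + X]big1 ?addr0; last first.
      move=> j _; have jN : (j < size g)%N by apply: le_pred_size; rewrite -ltnS.
      have -> : (x == gm j) = false.
        apply/negbTE/negP => /eqP e; rewrite e in a b.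
        have := grid_lt_index (ltnW kN) a; have := grid_lt_index jN b; lia.
      by rewrite mul0r.
    rewrite (bigD1 (Ordinal kl)) //= a b /= mul1r big1 ?addr0.
      by apply: I => //; rewrite a b.
    move=> j /eqP jk.
    have jN : (j.+1 < size g)%N by apply: lt_pred_size.
    have -> : (gm j < x < gm j.+1) = false.
      apply/negbTE/negP => /andP[c e]; apply: jk; apply: val_inj => /=.
      have h1 := grid_lt_index (ltnW jN) (lt_trans c b).
      have h2 := grid_lt_index (ltnW kN) (lt_trans a e).
      lia.
    by rewrite mul0r.
Qed.

Lemma measurable_piecewise v f : (forall j, (j < ell)%N -> continuous (v j)) ->
  measurable_fun setT (piecewise v f).
Proof.
move=> cv; apply: measurable_funD.
- apply: measurable_sum => j; apply: measurable_funM.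
  + have -> : (fun x : R => (gm j < x < gm j.+1)%R%:R : R) =
      \1_(`]gm j, gm j.+1[%classic : set R).
      by apply: funext => x; rewrite indicE mem_setE in_itv.
    apply: measurable_indic; exact: measurable_itv.
  + by apply: continuous_measurable_fun; apply: cv; exact: ltn_ord.
- apply: measurable_sum => j; apply: measurable_funM.
  + have -> : (fun x : R => (x == gm j)%:R : R) = \1_([set gm j]%classic : set R).
      by apply: funext => x; rewrite indicE in_set1.
    apply: measurable_indic; exact: measurable_set1.
  + exact: measurable_cst.
Qed.

Lemma bounded_piecewise v f : (forall j, (j < ell)%N -> continuous (v j)) ->
  exists M, forall x, `|piecewise v f x| <= M.
Proof.
move=> cv.
have hM (j : nat) : exists M : R, 0 <= M /\
    ((j < ell)%N -> forall x, gm j <= x <= gm j.+1 -> `|v j x| <= M).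
  case: (ltnP j ell) => jl; last first.
    by exists 0; split => // h; move: jl; rewrite leqNgt h.
  have ab : gm j <= gm j.+1 by apply/ltW/grid_lt => //; exact: lt_pred_size.
  have cw : {within `[gm j, gm j.+1], continuous (v j)}.
    by apply: continuous_subspaceT; exact: cv.
  have [c1 _ Hc1] := EVT_max ab cw; have [c2 _ Hc2] := EVT_min ab cw.
  exists (`|v j c1| + `|v j c2|); split; first by rewrite addr_ge0.
  move=> _ x hx; have xi : x \in `[gm j, gm j.+1] by rewrite in_itv.
  have h1 := Hc1 x xi; have h2 := Hc2 x xi.
  rewrite ler_norml; apply/andP; split.
  - have := ler_norm (- v j c2); rewrite normrN; have := normr_ge0 (v j c1); lra.
  - have := ler_norm (v j c1); have := normr_ge0 (v j c2); lra.
have [Mf HMf] := choice hM.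
exists (\sum_(j < ell) Mf j + \sum_(j < ell.+1) `|f (gm j)|) => x.
rewrite /piecewise; apply: le_trans (ler_normD _ _) _; apply: lerD.
- apply: le_trans (ler_norm_sum _ _ _) _; apply: ler_sum => j _.
  have [M0 HM] := HMf j.
  case: (boolP (gm j < x < gm j.+1)) => hx /=.
  + rewrite mul1r; apply: HM => //; case/andP: hx => a b; by rewrite !ltW.
  + by rewrite mul0r normr0.
- apply: le_trans (ler_norm_sum _ _ _) _; apply: ler_sum => j _.
  by case: (x == gm j) => /=; [rewrite mul1r | rewrite mul0r normr0].
Qed.

Section UfunAt.
Variable A : set (R -> R).
Implicit Types f k : R -> R.

Lemma Ufun_at_out f x : Ufun_at A g f -> x < gm 0 \/ gm ell < x -> f x = 0.
Proof. by move=> [v [_ [Z _]]]; apply: Z. Qed.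

Lemma Ufun_at_measurable_bounded f : Ufun_at A g f ->
  measurable_fun setT f /\ exists M, forall x, `|f x| <= M.
Proof.
move=> [v [Hv [Z [I _]]]].
have cv j : (j < ell)%N -> continuous (v j).
  move=> /Hv [_ [d _]] x; apply/differentiable_continuous.
  by rewrite -derivable1_diffP; exact: d.
have E : f = piecewise v f by apply: funext; apply: piecewiseE.
split; first by rewrite {1}E; apply: measurable_piecewise.
have [M HM] := bounded_piecewise f cv; exists M => x; rewrite {1}E; exact: HM.
Qed.

Lemma bounded_fun_setT f M : (forall x, `|f x| <= M) -> [bounded f x | x in setT].
Proof.
move=> HM; exists M; split; first exact: num_real.
by move=> M' hM' x _ /=; apply: le_trans (HM x) (ltW hM').
Qed.

(* Elements vanish off the compact [gm 0, gm ell], so local integrability of k is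
   enough for f * k to be integrable on the whole line. *)
Lemma Ufun_at_integrable_mul f k : Ufun_at A g f -> locally_integrable setT k ->
  lebesgue_measure.-integrable setT (EFin \o (fun x => f x * k x)).
Proof.
move=> Uf [mk _ hK].
have [mf [M HM]] := Ufun_at_measurable_bounded Uf.
pose K := (`[gm 0, gm ell]%classic : set R).
have mK : measurable K := measurable_itv _.
have iK : lebesgue_measure.-integrable K (EFin \o k).
  apply/integrableP; split.
    by apply/measurable_EFinP; apply: measurable_funS mk.
  apply: hK => //; exact: segment_compact.
have : lebesgue_measure.-integrable setT ((EFin \o f) \* ((EFin \o k) \_ K))%E.
  apply: integrableMr => //; first exact: bounded_fun_setT HM.
  by rewrite -integrable_mkcond.
apply: eq_integrable => // x _ /=; rewrite /patch.
case: ifP => xK; first by rewrite EFinM.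
move/negbT: xK; rewrite mem_setE in_itv /= negb_and -!ltNge => xo.
rewrite (Ufun_at_out Uf); first by rewrite mul0r mul0e.
by case/orP: xo; [left|right].
Qed.

Lemma Ufun_at_locally_integrable f : Ufun_at A g f -> locally_integrable setT f.
Proof.
move=> Uf; apply: open_integrable_locally; first exact: openT.
have [mf [M HM]] := Ufun_at_measurable_bounded Uf.
pose K := (`[gm 0, gm ell]%classic : set R).
have : lebesgue_measure.-integrable setT ((EFin \o f) \* (EFin \o \1_K))%E.
  apply: integrableMr => //; first exact: bounded_fun_setT HM.
  exact: integrable_indic_itv.
apply: eq_integrable => // x _ /=; rewrite indicE.
case: (boolP (x \in K)) => xK; first by rewrite mule1.
move: xK; rewrite mem_setE in_itv /= negb_and -!ltNge => xo.
rewrite (Ufun_at_out Uf) ?mul0e //.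
by case/orP: xo; [left|right].
Qed.

Lemma Ufun_at_integrable_mulU f k : Ufun_at A g f -> Ufun_at A g k ->
  lebesgue_measure.-integrable setT (EFin \o (fun x => f x * k x)).
Proof. by move=> Uf Uk; apply: Ufun_at_integrable_mul Uf (Ufun_at_locally_integrable Uk). Qed.

Lemma Ufun_at_expansion (S : seq R) (e : R -> R -> R) (c : R -> R) v :
  Ufun_at A g v -> (forall q, q \in S -> Ufun_at A g (e q)) ->
  (forall x, gm 0 <= x <= gm ell -> v x = \sum_(b <- undup S) c b * e b x) ->
  forall x, v x = \sum_(b <- undup S) c b * e b x.
Proof.
move=> Uv Ue H x.
case: (ltrP x (gm 0)) => h0; last case: (ltrP (gm ell) x) => h1; last exact/H/andP.
all: have hx : x < gm 0 \/ gm ell < x by [left|right].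
all: rewrite (Ufun_at_out Uv hx) big1_seq // => b /andP[_ bS].
all: by rewrite (Ufun_at_out (Ue b _) hx) ?mulr0 // -mem_undup.
Qed.

Section Dual.
Variables (S : seq R) (e1 e2 : R -> R -> R).
Hypothesis dualS : dual_family A g S e1 e2.

Lemma lint_dual_coef (c : R -> R) z a :
  (forall x, z x = \sum_(b <- undup S) c b * e1 b x) -> a \in S ->
  lint z (e2 a) = c a.
Proof.
have [hU hD] := dualS.
move=> hz aS; rewrite (eq_lint _ hz) lint_sum.
  by apply: (big_undup_kronecker c aS) => b bS; exact: hD.
move=> q; rewrite mem_undup => qS.
exact: Ufun_at_integrable_mulU (hU q qS).1 (hU a aS).2.
Qed.

Lemma lint_dual_proj h (c : R -> R) v :
  locally_integrable setT h -> Ufun_at A g v ->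
  (forall x, v x = \sum_(b <- undup S) c b * e1 b x) ->
  lint (fun x => \sum_(q <- undup S) lint h (e1 q) * e2 q x) v = lint h v.
Proof.
have [hU _] := dualS.
move=> hh Uv hv.
rewrite lint_sum; last first.
  move=> q; rewrite mem_undup => qS.
  exact: Ufun_at_integrable_mulU (hU q qS).2 Uv.
rewrite [RHS]lintC (eq_lint _ hv) lint_sum; last first.
  by move=> q; rewrite mem_undup => qS; apply: Ufun_at_integrable_mul (hU q qS).1 hh.
apply: eq_big_seq => q; rewrite mem_undup => qS.
by rewrite [lint (e2 q) v]lintC (lint_dual_coef hv qS) lintC mulrC.
Qed.

End Dual.
End UfunAt.
End Grid.

Section Ultrafilter.
Variable R : realType.
Variable Uf : set (set (Xidx R)).
Hypothesis hUf : fine_ultrafilter Uf.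
Implicit Types P Q : Xidx R -> Prop.

Lemma ae_mono P Q : Defs.ae Uf P -> (forall l, P l -> Q l) -> Defs.ae Uf Q.
Proof. by case: hUf => _ [_ [mono _]] hP PQ; apply: (mono _ _ hP) => l; apply: PQ. Qed.

Lemma ae_and P Q : Defs.ae Uf P -> Defs.ae Uf Q -> Defs.ae Uf (fun l => P l /\ Q l).
Proof. by case: hUf => _ [_ [_ [andI _]]]; apply: andI. Qed.

Lemma ae_of_all P : (forall l, P l) -> Defs.ae Uf P.
Proof. by move=> H; case: hUf => hT _; apply: (ae_mono hT) => l _; apply: H. Qed.

Lemma ae_contra P : Defs.ae Uf P -> Defs.ae Uf (fun l => ~ P l) -> False.
Proof.
move=> hP hN; case: hUf => _ [hnot0 _]; apply: hnot0.
by apply: (ae_mono (ae_and hP hN)) => l [].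
Qed.

Lemma ae_or_not P : Defs.ae Uf P \/ Defs.ae Uf (fun l => ~ P l).
Proof. by case: hUf => _ [_ [_ [_ [compl _]]]]; apply: compl. Qed.

(* Los' theorem for universal statements: a property holding at all internal
   points a (nets of points) holds, for almost all lambda, at every point. The
   counterexample net is chosen pointwise. *)
Lemma ae_forall (T : Type) (t0 : T) (Q P : Xidx R -> T -> Prop) :
  (forall a : Xidx R -> T,
     Defs.ae Uf (fun l => Q l (a l)) -> Defs.ae Uf (fun l => P l (a l))) ->
  Defs.ae Uf (fun l => forall x, Q l x -> P l x).
Proof.
move=> H; case: (ae_or_not (fun l => forall x, Q l x -> P l x)) => // hc; exfalso.
have ex l : exists y : T, ~ (forall x, Q l x -> P l x) -> Q l y /\ ~ P l y.
  case: (pselect (forall x, Q l x -> P l x)) => h; first by exists t0.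
  move/existsNP: h => [y hy]; exists y => _.
  split; first by apply: contrapT => nq; apply: hy.
  by move=> py; apply: hy.
have [a Ha] := choice ex.
have hQ : Defs.ae Uf (fun l => Q l (a l)) by apply: (ae_mono hc) => l /Ha[].
have hnP : Defs.ae Uf (fun l => ~ P l (a l)) by apply: (ae_mono hc) => l /Ha[].
exact: ae_contra (H a hQ) hnP.
Qed.

Lemma heq_refl (a : hyp R) : heq Uf a a.
Proof. exact: ae_of_all. Qed.

Lemma heq_sym (a b : hyp R) : heq Uf a b -> heq Uf b a.
Proof. by move=> h; apply: (ae_mono h) => l ->. Qed.

Lemma ae_kronecker (a b : hyp R) :
  Defs.ae Uf (fun l => (if `[< heq Uf a b >] then 1 else 0 : R) =
                       if a l == b l then 1 else 0).
Proof.
case: (pselect (heq Uf a b)) => hab.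
  by rewrite asboolT //; apply: (ae_mono hab) => l ->; rewrite eqxx.
rewrite asboolF //; case: (ae_or_not (fun l => a l = b l)) => // hne.
by apply: (ae_mono hne) => l /eqP/negbTE ->.
Qed.

End Ultrafilter.

Section Representation.
Variable R : realType.
Variable Uf : set (set (Xidx R)).
Hypothesis hUf : fine_ultrafilter Uf.
Variables (beta eta : hyp R) (G S : hfin R).
Hypothesis hG : is_grid Uf beta eta G.

Definition spans_U (e : ifam R) : Prop :=
  forall v, inU Uf G v -> exists c : Xidx R -> R -> R,
    forall x, inDom Uf beta x -> heq Uf (iapp v x) (hsum S c e x).

Definition ae_dual (e1 e2 : ifam R) : Prop :=
  Defs.ae Uf (fun l => dual_family (proj1_sig l) (G l) (S l) (e1 l) (e2 l)).

Definition grid_at (l : Xidx R) : Prop :=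
  sorted (fun x y : R => x < y) (G l) /\ (1 < size (G l))%N /\
  nth 0 (G l) 0 = - beta l /\ nth 0 (G l) (size (G l)).-1 = beta l.

Lemma ae_grid_at : Defs.ae Uf grid_at.
Proof.
move: hG => [hb [_ [_ [hs _]]]].
apply: (ae_mono hUf (ae_and hUf (hb 0) hs)) => l [b0 [so [hd [hl _]]]].
have n2 : (1 < size (G l))%N.
  by move: hd hl; case: (G l) => [|x [|y s']] //= hd hl; lra.
by split => //; split => //; rewrite nth0 nth_last.
Qed.

Lemma ae_expansion (e : ifam R) (v : ifun R) (c : Xidx R -> R -> R) :
  (forall x, inDom Uf beta x -> heq Uf (iapp v x) (hsum S c e x)) ->
  Defs.ae Uf (fun l => forall x, - beta l <= x <= beta l ->
    v l x = \sum_(q <- undup (S l)) c l q * e l q x).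
Proof.
move=> Hc; apply: (ae_forall hUf 0 (Q := fun l x => - beta l <= x <= beta l)) => a ha.
by apply: Hc; split; apply: (ae_mono hUf ha) => l /andP[].
Qed.

Lemma ae_expansion_everywhere (e1 e2 : ifam R) (v : ifun R) (c : Xidx R -> R -> R) :
  ae_dual e1 e2 -> inU Uf G v ->
  (forall x, inDom Uf beta x -> heq Uf (iapp v x) (hsum S c e1 x)) ->
  Defs.ae Uf (fun l => forall x, v l x = \sum_(q <- undup (S l)) c l q * e1 l q x).
Proof.
move=> Hd Hv /ae_expansion Hc.
apply: (ae_mono hUf (ae_and hUf ae_grid_at (ae_and hUf Hd (ae_and hUf Hv Hc)))).
move=> l [[so [n2 [h0 h1]]] [[hU _] [hv he]]].
apply: (Ufun_at_expansion hv); first by move=> q /hU[].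
by rewrite h0 h1.
Qed.

Lemma inU_hsum (e : ifam R) (k : Xidx R -> R -> R) :
  Defs.ae Uf (fun l => forall q, q \in S l -> Ufun_at (proj1_sig l) (G l) (e l q)) ->
  inU Uf G (fun l x => \sum_(q <- undup (S l)) k l q * e l q x).
Proof.
move=> H; apply: (ae_mono hUf H) => l hl.
by apply: Ufun_at_sum => q; rewrite mem_undup; exact: hl.
Qed.

Lemma ae_dual_basis (d s : ifam R) :
  is_Delta_basis Uf beta G S d -> is_Sigma_basis Uf beta G S d s -> ae_dual d s.
Proof.
move=> [_ [_ [hdU _]]] [[hsU _] hdual].
have hU : Defs.ae Uf (fun l => forall q, q \in S l ->
    Ufun_at (proj1_sig l) (G l) (d l q) /\ Ufun_at (proj1_sig l) (G l) (s l q)).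
  apply: (ae_forall hUf 0 (Q := fun l q => q \in S l)) => a ha.
  by apply: (ae_mono hUf (ae_and hUf (hdU a ha) (hsU a ha))) => l [? ?]; split.
have hD : Defs.ae Uf (fun l => forall p : R * R, (p.1 \in S l) && (p.2 \in S l) ->
    lint (d l p.2) (s l p.1) = if p.2 == p.1 then 1 else 0).
  apply: (ae_forall hUf (0, 0) (Q := fun l p => (p.1 \in S l) && (p.2 \in S l))) => p hp.
  have hp1 : hmem Uf (fun l => (p l).1) S by apply: (ae_mono hUf hp) => l /andP[].
  have hp2 : hmem Uf (fun l => (p l).2) S by apply: (ae_mono hUf hp) => l /andP[].
  apply: (ae_mono hUf (ae_and hUf (hdual _ _ hp2 hp1) (ae_kronecker hUf (fun l => (p l).2) (fun l => (p l).1)))).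
  by move=> l [e1 e2]; exact: etrans e1 e2.
apply: (ae_mono hUf (ae_and hUf hU hD)) => l [hUl hDl]; split => // q b qS bS.
by apply: (hDl (q, b)); rewrite /= qS bS.
Qed.

Lemma ae_dual_sym (e1 e2 : ifam R) : ae_dual e1 e2 -> ae_dual e2 e1.
Proof. by move=> H; apply: (ae_mono hUf H) => l; apply: dual_family_sym. Qed.

Section Projection.
Variables (e1 e2 : ifam R).
Hypotheses (dual12 : ae_dual e1 e2) (span1 : spans_U e1).

Lemma represents_unique (w1 w2 : ifun R) : inU Uf G w1 -> inU Uf G w2 ->
  (forall v, inU Uf G v -> heq Uf (iint w1 v) (iint w2 v)) -> ifeq Uf beta w1 w2.
Proof.
move=> Hw1 Hw2 Hw12.
pose z : ifun R := fun l x => w1 l x - w2 l x.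
have Hz : inU Uf G z.
  apply: (ae_mono hUf (ae_and hUf Hw1 Hw2)) => l [h1 h2].
  have -> : z l = (fun x => 1 * w1 l x + (-1) * w2 l x).
    by apply: funext => x; rewrite /z mul1r mulN1r.
  exact: Ufun_at_lincomb.
have [c Hc] := span1 Hz.
have Hexp := ae_expansion_everywhere dual12 Hz Hc.
have Hc0 : Defs.ae Uf (fun l => forall a, a \in S l -> c l a = 0).
  apply: (ae_forall hUf 0 (Q := fun l a => a \in S l)) => a ha.
  have Hsa : inU Uf G (ifam_at e2 a).
    by apply: (ae_mono hUf (ae_and hUf dual12 ha)) => l [[hU _] hal]; case: (hU _ hal).
  apply: (ae_mono hUf (ae_and hUf ae_grid_at (ae_and hUf dual12 (ae_and hUf Hexp
    (ae_and hUf (Hw12 _ Hsa) (ae_and hUf ha (ae_and hUf Hw1 Hw2))))))).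
  move=> l [[so [n2 _]] [hd [he [e12 [hal [h1 h2]]]]]].
  have Ua := (hd.1 _ hal).2.
  rewrite -(lint_dual_coef so n2 hd he hal) /z lintB.
  - by move: e12; rewrite /iint /ifam_at => ->; rewrite subrr.
  - exact: Ufun_at_integrable_mulU so n2 _ _ _ h1 Ua.
  - exact: Ufun_at_integrable_mulU so n2 _ _ _ h2 Ua.
move=> x [hx1 hx2].
apply: (ae_mono hUf (ae_and hUf Hexp (ae_and hUf Hc0 (ae_and hUf hx1 hx2)))).
move=> l [he [hc _]]; apply/eqP; rewrite -subr_eq0 -/(z l (x l)) he.
by rewrite big1_seq // => q /andP[_ hq]; rewrite hc ?mul0r // -mem_undup.
Qed.

Variable u : ifun R.
Hypothesis hu : inLloc_star Uf u.

Definition dual_proj : ifun R :=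
  fun l x => \sum_(q <- undup (S l)) lint (u l) (e1 l q) * e2 l q x.

Lemma inU_dual_proj : inU Uf G dual_proj.
Proof. by apply: inU_hsum; apply: (ae_mono hUf dual12) => l [hU _] q /hU[]. Qed.

Lemma dual_proj_represents v : inU Uf G v -> heq Uf (iint dual_proj v) (iint u v).
Proof.
move=> Hv; have [c Hc] := span1 Hv.
have Hexp := ae_expansion_everywhere dual12 Hv Hc.
apply: (ae_mono hUf (ae_and hUf ae_grid_at (ae_and hUf hu (ae_and hUf dual12
  (ae_and hUf Hv Hexp))))) => l [[so [n2 _]] [hul [hd [hv he]]]].
rewrite /iint /dual_proj; exact: (lint_dual_proj so n2 hd hul hv he).
Qed.

End Projection.
End Representation.

Theorem mainTheorem6 (R : realType) (Uf : set (set (Xidx R)))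
  (hUf : fine_ultrafilter Uf)
  (beta eta : hyp R) (G : hfin R) (hG : is_grid Uf beta eta G)
  (S : hfin R) (d s : ifam R)
  (hd : is_Delta_basis Uf beta G S d) (hs : is_Sigma_basis Uf beta G S d s)
  (u : ifun R) (hu : inLloc_star Uf u) :
  exists ut : ifun R,
    [/\ inU Uf G ut,
        (forall v, inU Uf G v -> heq Uf (iint ut v) (iint u v)),
        (forall w, inU Uf G w ->
           (forall v, inU Uf G v -> heq Uf (iint w v) (iint u v)) ->
           ifeq Uf beta w ut),
        (forall x, inDom Uf beta x ->
           heq Uf (iapp ut x) (hsum S (fun l q => lint (u l) (d l q)) s x))
      & (forall x, inDom Uf beta x ->
           heq Uf (iapp ut x) (hsum S (fun l q => lint (u l) (s l q)) d x))].
Proof.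
have [_ [_ [_ [span_d _]]]] := hd.
have [[_ [span_s _]] _] := hs.
have dual_ds := ae_dual_basis hUf hd hs.
have dual_sd := ae_dual_sym hUf dual_ds.
have ut_in := inU_dual_proj hUf dual_ds u.
have ut_rep := dual_proj_represents hUf hG dual_ds span_d hu.
have unique w1 w2 : inU Uf G w1 -> inU Uf G w2 ->
    (forall v, inU Uf G v -> heq Uf (iint w1 v) (iint u v)) ->
    (forall v, inU Uf G v -> heq Uf (iint w2 v) (iint u v)) -> ifeq Uf beta w1 w2.
  move=> Hw1 Hw2 rep1 rep2; apply: (represents_unique hUf hG dual_ds span_d Hw1 Hw2).
  move=> v Hv; apply: (ae_mono hUf (ae_and hUf (rep1 v Hv) (rep2 v Hv))) => l [-> ->] //.
exists (dual_proj S d s u); split => //.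
- by move=> w Hw rep; apply: unique.
- by move=> x _; exact: heq_refl.
- move=> x hx; apply: (heq_sym hUf).
  apply: (unique _ _ (inU_dual_proj hUf dual_sd u) ut_in _ ut_rep x hx).
  exact: (dual_proj_represents hUf hG dual_sd span_s hu).
Qed.
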